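(* Assume (A1). Then every connected component of $\mathcal{C}=\{x\in\mathcal{E}:\|h(x)\|\le R\}$ contains a point $\bar z$ with $h(\bar z)=0$.
   Context: $\mathcal{E}$ is a Euclidean space, $h\colon\mathcal{E}\to\mathbb{R}^m$ is $C^\infty$, $\|\cdot\|$ is the 2-norm on $\mathbb{R}^m$, and $\sigma_{\min}(\mathrm{D}h(x))$ denotes the $m$-th singular value of the differential $\mathrm{D}h(x)\colon\mathcal{E}\to\mathbb{R}^m$. (A1): there exist constants $R,\underline{\sigma}>0$ such that $\sigma_{\min}(\mathrm{D}h(x))\ge\underline{\sigma}$ for all $x\in\mathcal{C}=\{x:\|h(x)\|\le R\}$. *)

From HB Require Import structures.
From mathcomp Require Import all_boot all_order all_algebra.
From mathcomp Require Import all_classical all_reals all_analysis.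
Set Implicit Arguments. Unset Strict Implicit. Unset Printing Implicit Defensive.
Import Order.TTheory GRing.Theory Num.Theory.
Import numFieldNormedType.Exports.
Local Open Scope classical_set_scope.
Local Open Scope ring_scope.

(* The Euclidean space E is modelled as 'rV[R]_n (R^n); R^m as 'rV[R]_m. *)

(* Euclidean 2-norm on row vectors (the library's norm on 'rV is the max norm). *)
Definition norm2 {R : realType} {m : nat} (v : 'rV[R]_m) : R :=
  Num.sqrt (\sum_(i < m) v ord0 i ^+ 2).

Fixpoint Ck {R : realType} {n m : nat} (k : nat) (f : 'rV[R]_n -> 'rV[R]_m) : Prop :=
  match k with
  | 0%N => continuous f
  | k'.+1 => (forall x, differentiable f x) /\
             (forall v : 'rV[R]_n, Ck k' (fun x => 'd f x v))
  end.

Definition smooth {R : realType} {n m : nat} (f : 'rV[R]_n -> 'rV[R]_m) : Prop :=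
  forall k, Ck k f.

(* The differential Dh(x) is represented by the library's Jacobian
   'J h x = lin1_mx ('d h x) (an n x m matrix acting on row vectors,
   v |-> v *m 'J h x); its matrix in column convention is ('J h x)^T. *)

Definition lambda_min {R : realType} {m : nat} (M : 'M[R]_m) : R :=
  inf [set a : R | eigenvalue M a].

(* m-th singular value of an m x n matrix A: square root of the smallest
   eigenvalue of A A^T (equals 0 when m > n, as per convention). *)
Definition sigma_min {R : realType} {m n : nat} (A : 'M[R]_(m, n)) : R :=
  Num.sqrt (lambda_min (A *m A^T)).

From HB Require Import structures.
From mathcomp Require Import all_boot all_order all_algebra.
From mathcomp Require Import all_classical all_reals all_analysis.
From mathcomp Require Import ring lra.
Import Order.TTheory GRing.Theory Num.Theory.
Import numFieldNormedType.Exports.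
Local Open Scope classical_set_scope.
Local Open Scope ring_scope.

(* Let K be the component of x0 in C and minimise
   F(y) = |h(y)| + (sigma/2) |y - x0| over the compact set {y in K | F(y) <= F(x0)}.
   If h(z) <> 0 at a minimiser z, take d = - Dh(z)^T h(z): the slope of |h|^2
   along d is -2 |d|_2^2, and sigma_min(Dh(z)) >= sigma gives |d|_2 >= sigma |h(z)|,
   so |h| decreases at rate at least sigma |d|_2, while the penalty (measured in
   the sup norm of 'rV) grows at rate (sigma/2) |d|_inf <= (sigma/2) |d|_2.  A short
   segment from z along d stays in C, hence in K, and lowers F: a contradiction.
   The singular value bound enters through the variational characterisation of
   lambda_min (A A^T): a minimiser of |v A| on the unit sphere is an eigenvector. *)

Lemma closed_sublevel {R : realType} {T : topologicalType} (f : T -> R) (c : R) :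
  continuous f -> closed [set x | f x <= c].
Proof.
move=> f_cont; have : closed (f @^-1` [set r | r <= c]).
  by apply: preimage_closed => [x _|]; [exact: f_cont | exact: closed_le].
by [].
Qed.

Section NormedModule.
Context {R : realType} {V : normedModType R}.

Lemma bounded_set_normr_le (A : set V) (M : R) :
  (forall x, A x -> `|x| <= M) -> bounded_set A.
Proof.
move=> A_le; rewrite /bounded_set /= /bounded_near; near=> N => x Ax /=.
by apply: le_trans (A_le _ Ax) _; near: N; apply: nbhs_pinfty_ge; exact: num_real.
Unshelve. all: by end_near.
Qed.

Lemma connected_component_segment {C : set V} {x0 z d : V} {s : R} :
  0 <= s -> connected_component C x0 z ->
  (forall t, 0 <= t <= s -> C (z + t *: d)) -> connected_component C x0 (z + s *: d).
Proof.
move=> s_ge0 Kz segC; pose seg := (fun t : R => z + t *: d) @` `[0, s].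
have seg_connected : connected seg.
  apply: connected_continuous_connected; first exact: segment_connected.
  apply: continuous_subspaceT => t.
  by apply: cvgD (cvg_cst z) _; exact: scalel_continuous.
have seg_z : seg z.
  by exists 0; [rewrite /= in_itv /= lexx | rewrite scale0r addr0].
have seg_sub : seg `<=` C.
  by move=> y [t /=]; rewrite in_itv /= => t_in <-; exact: segC.
rewrite (same_connected_component Kz).
apply: (connected_component_max seg_z seg_sub seg_connected).
by exists s; rewrite //= in_itv /= s_ge0 lexx.
Qed.

Lemma is_derive_chord_lt {f : V -> R} {x v : V} {df : R} (c : R) :
  is_derive x v f df -> df < c ->
  exists2 e : R, 0 < e & forall s : R, 0 < s < e -> f (x + s *: v) < f x + s * c.
Proof.
case=> f_derivable <- Dfc; have /cvgr_lt/(_ c Dfc) := f_derivable.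
move=> /nbhs_ballP [e /= e_gt0 quot_lt]; exists e => // s /andP[s_gt0 s_lt].
have := quot_lt s; rewrite /ball /= sub0r normrN gtr0_norm // => /(_ s_lt).
rewrite gt_eqF // => /(_ isT).
by rewrite [_ *: _]mulrC ltr_pdivrMr // (addrC x) mulrC; lra.
Qed.

Lemma is_derive_coord {k l : nat} {f : V -> 'M[R]_(k, l)} {x v : V} i j :
  derivable f x v -> is_derive x v (fun y => f y i j) ('D_v f x i j).
Proof.
move=> df; have /(continuous_cvg _ (@coord_continuous _ _ _ i j _)) := df.
set g := _ \o _ => g_cvg.
have gE : g = fun t : R => t^-1 *: ((fun y => f y i j) (t *: v + x) - f x i j).
  by apply/funext => t; rewrite /g /= !mxE.
by rewrite gE in g_cvg; apply: DeriveDef; [exact: cvgP g_cvg | exact: cvg_lim].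
Qed.

End NormedModule.

Lemma compact_coercive_sublevel {R : realType} {n : nat} {K : set 'rV[R]_n}
    {F : 'rV[R]_n -> R} (x0 : 'rV[R]_n) {c : R} (M : R) :
  closed K -> continuous F -> 0 < c -> (forall y, c * `|y - x0| <= F y) ->
  compact (K `&` [set y | F y <= M]).
Proof.
move=> K_closed F_cont c_gt0 F_ge; apply: bounded_closed_compact.
  apply: (@bounded_set_normr_le _ _ _ (`|x0| + M / c)) => y [_ /= Fy].
  have dist_le : `|y - x0| <= M / c.
    by rewrite ler_pdivlMr // mulrC (le_trans (F_ge y)).
  by have := ler_normD (y - x0) x0; rewrite subrK; lra.
by apply: closedI => //; exact: closed_sublevel.
Qed.

Section SquaredNorm.
Context {R : realType}.

Definition sqnorm2 {k : nat} (v : 'rV[R]_k) : R := \sum_(i < k) v ord0 i ^+ 2.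

Lemma norm2E {k : nat} (v : 'rV[R]_k) : norm2 v = Num.sqrt (sqnorm2 v).
Proof. by []. Qed.

Lemma sqnorm2_ge0 {k : nat} (v : 'rV[R]_k) : 0 <= sqnorm2 v.
Proof. by apply: sumr_ge0 => i _; rewrite sqr_ge0. Qed.

Lemma sqnorm2_mx {k : nat} (v : 'rV[R]_k) : sqnorm2 v = (v *m v^T) ord0 ord0.
Proof. by rewrite !mxE; apply: eq_bigr => i _; rewrite mxE expr2. Qed.

Lemma sqnorm2Z {k : nat} (c : R) (v : 'rV[R]_k) : sqnorm2 (c *: v) = c ^+ 2 * sqnorm2 v.
Proof. by rewrite /sqnorm2 mulr_sumr; apply: eq_bigr => i _; rewrite mxE exprMn. Qed.

Lemma sqnorm2N {k : nat} (v : 'rV[R]_k) : sqnorm2 (- v) = sqnorm2 v.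
Proof. by rewrite -scaleN1r sqnorm2Z sqrrN expr1n mul1r. Qed.

Lemma sqr_coord_le_sqnorm2 {k : nat} (v : 'rV[R]_k) i : v ord0 i ^+ 2 <= sqnorm2 v.
Proof.
by rewrite /sqnorm2 (bigD1 i) //= lerDl; apply: sumr_ge0 => j _; exact: sqr_ge0.
Qed.

Lemma sqnorm2_eq0 {k : nat} (v : 'rV[R]_k) : sqnorm2 v = 0 -> v = 0.
Proof.
move=> v0; apply/matrixP => i j; rewrite (ord1 i) mxE; apply/eqP.
by rewrite -sqrf_eq0 eq_le sqr_ge0 andbT -v0 sqr_coord_le_sqnorm2.
Qed.

Lemma sqnorm2_gt0 {k : nat} {v : 'rV[R]_k} : v != 0 -> 0 < sqnorm2 v.
Proof.
by rewrite lt_def sqnorm2_ge0 andbT; apply: contra_neq; exact: sqnorm2_eq0.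
Qed.

Lemma sqr_normr_le_sqnorm2 {k : nat} (v : 'rV[R]_k) : `|v| ^+ 2 <= sqnorm2 v.
Proof.
suff : `|v| <= Num.sqrt (sqnorm2 v).
  by rewrite -(ler_sqr _ (sqrtr_ge0 _)) ?nnegrE // sqr_sqrtr // sqnorm2_ge0.
rewrite (_ : `|v| = mx_norm v) // mx_normrE; apply: bigmax_le => [|[i j] _] /=.
  exact: sqrtr_ge0.
by rewrite (ord1 i) -sqrtr_sqr ler_sqrt ?sqnorm2_ge0 // sqr_coord_le_sqnorm2.
Qed.

Lemma sqnorm2_mulmx_continuous {k l : nat} (A : 'M[R]_(k, l)) :
  continuous (fun v : 'rV[R]_k => sqnorm2 (v *m A)).
Proof.
have mulA_coord j : continuous (fun v : 'rV[R]_k => (v *m A) ord0 j).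
  under [fun v => _]funext => v do rewrite mxE.
  apply: continuous_big => //= [|i _ v]; first exact: add_continuous.
  by apply: continuousM; [exact: coord_continuous | exact: cst_continuous].
apply: continuous_big => //= [|j _ v]; first exact: add_continuous.
by apply: continuousM; exact: mulA_coord.
Qed.

Lemma sqnorm2_continuous k : continuous (@sqnorm2 k).
Proof.
have := sqnorm2_mulmx_continuous (1%:M : 'M[R]_k).
by under [fun v => _]funext do rewrite mulmx1.
Qed.

Lemma norm2_continuous k : continuous (@norm2 R k).
Proof.
have -> : @norm2 R k = Num.sqrt \o @sqnorm2 k by [].
move=> v; apply: continuous_comp; first exact: sqnorm2_continuous.
exact: sqrt_continuous.
Qed.

End SquaredNorm.

Lemma is_derive_sqnorm2_comp {R : realType} {V : normedModType R} {k : nat}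
    {f : V -> 'rV[R]_k} {x v : V} :
  derivable f x v ->
  is_derive x v (fun y => sqnorm2 (f y)) (2 * (f x *m ('D_v f x)^T) ord0 ord0).
Proof.
move=> df.
have -> : (fun y => sqnorm2 (f y)) = \sum_(i < k) (fun y => f y ord0 i) ^+ 2.
  by rewrite fct_sumE; apply/funext => y; apply: eq_bigr => i _; rewrite exprfctE.
apply: is_derive_eq.
  by apply: is_derive_sum => i; exact/is_deriveX/is_derive_coord.
rewrite !mxE mulr_sumr; apply: eq_bigr => i _.
by rewrite mxE expr1 mulrA.
Qed.

Section Rayleigh.
Context {R : realType}.

Lemma sqnorm2_mulmx {k l : nat} (A : 'M[R]_(k, l)) (v : 'rV[R]_k) :
  sqnorm2 (v *m A) = (v *m (A *m A^T) *m v^T) ord0 ord0.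
Proof. by rewrite sqnorm2_mx trmx_mul !mulmxA. Qed.

Lemma quad_ge0_linear_eq0 (b c : R) : (forall t, 0 <= t * b + t ^+ 2 * c) -> b = 0.
Proof.
move=> bc; pose e := `|c| + 1; have e0 : 0 < e by rewrite ltr_pwDr ?normr_ge0.
have := bc (- b / e).
have -> : - b / e * b + (- b / e) ^+ 2 * c = (b / e) ^+ 2 * (c - e).
  by field; rewrite gt_eqF.
have ce : c - e < 0 by have := ler_norm c; rewrite /e; lra.
move=> quad_ge0; have : (b / e) ^+ 2 = 0 by have := sqr_ge0 (b / e); nra.
by move/eqP; rewrite sqrf_eq0 mulf_eq0 invr_eq0 (gt_eqF e0) orbF => /eqP.
Qed.

Lemma psd_form_eq0 {k : nat} (N : 'M[R]_k) (v : 'rV[R]_k) :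
  N^T = N -> (forall w : 'rV[R]_k, 0 <= (w *m N *m w^T) ord0 ord0) ->
  (v *m N *m v^T) ord0 ord0 = 0 -> v *m N = 0.
Proof.
move=> NT N_psd vNv0; set w := v *m N.
have vNw : (v *m N *m w^T) ord0 ord0 = sqnorm2 w by rewrite sqnorm2_mx.
have wNv : (w *m N *m v^T) ord0 ord0 = sqnorm2 w.
  by rewrite sqnorm2_mx /w trmx_mul NT !mulmxA.
apply: sqnorm2_eq0; suff : 2 * sqnorm2 w = 0 by lra.
(* the form of N at v + t w is 2 t |w|^2 + t^2 (w N w^T) *)
apply: (quad_ge0_linear_eq0 _ ((w *m N *m w^T) ord0 ord0)) => t.
have := N_psd (v + t *: w).
rewrite linearD linearZ /= !mulmxDl !mulmxDr -!scalemxAl -!scalemxAr.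
(* generalised, so that [mxE] only expands the sums and scalings of 1x1 matrices *)
move: (v *m N *m v^T) (v *m N *m w^T) (w *m N *m v^T) (w *m N *m w^T) vNv0 vNw wNv.
by move=> a b c d a0 b0 c0; rewrite !mxE a0 b0 c0; lra.
Qed.

Lemma sqnorm2_mulmx_min {k l : nat} (A : 'M[R]_(k.+1, l)) :
  exists2 v : 'rV[R]_k.+1, sqnorm2 v = 1 &
    forall u, sqnorm2 (v *m A) * sqnorm2 u <= sqnorm2 (u *m A).
Proof.
pose S := [set v : 'rV[R]_k.+1 | sqnorm2 v = 1].
have S0 : S !=set0.
  by exists (delta_mx 0 0); rewrite /S /= sqnorm2_mx trmx_delta mul_delta_mx mxE !eqxx.
have S_compact : compact S.
  apply: bounded_closed_compact.
    apply: (@bounded_set_normr_le _ _ _ 1) => v Sv.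
    have : `|v| ^+ 2 <= 1 by rewrite -Sv sqr_normr_le_sqnorm2.
    by rewrite -[X in _ <= X](expr1n _ 2) ler_sqr ?nnegrE.
  apply: (@preimage_closed _ _ _ [set 1 : R]); last exact: closed_eq.
  by move=> v _; exact: sqnorm2_continuous.
have [v /set_mem Sv vmin] :=
  compact_EVT_min S0 S_compact (continuous_subspaceT (sqnorm2_mulmx_continuous A)).
exists v => // u; have [u0|u_neq0] := eqVneq (sqnorm2 u) 0.
  by rewrite u0 mulr0 sqnorm2_ge0.
pose c := (Num.sqrt (sqnorm2 u))^-1.
have cu1 : c ^+ 2 * sqnorm2 u = 1.
  by rewrite /c exprVn sqr_sqrtr ?sqnorm2_ge0 // mulVf.
have := vmin (c *: u) (mem_set _); rewrite /S /= sqnorm2Z cu1 => /(_ erefl).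
rewrite -scalemxAl sqnorm2Z => /(ler_wpM2r (sqnorm2_ge0 u)).
by rewrite mulrAC cu1 mul1r.
Qed.

Lemma eigenvalue_sqnorm2_min {k l : nat} (A : 'M[R]_(k, l)) (v : 'rV[R]_k) :
  sqnorm2 v = 1 -> (forall u, sqnorm2 (v *m A) * sqnorm2 u <= sqnorm2 (u *m A)) ->
  eigenvalue (A *m A^T) (sqnorm2 (v *m A)).
Proof.
set l0 := sqnorm2 (v *m A) => v1 vmin; pose N := A *m A^T - l0%:M.
have formN w : (w *m N *m w^T) ord0 ord0 = sqnorm2 (w *m A) - l0 * sqnorm2 w.
  rewrite mulmxBr mul_mx_scalar mulmxBl -scalemxAl sqnorm2_mulmx sqnorm2_mx.
  by move: (w *m _ *m _) (w *m w^T) => B C; rewrite !mxE.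
have vN0 : v *m N = 0.
  apply: psd_form_eq0.
  - by rewrite /N linearB /= trmx_mul trmxK tr_scalar_mx.
  - by move=> w; rewrite formN subr_ge0 vmin.
  - by rewrite formN v1 mulr1 subrr.
apply/eigenvalueP; exists v.
  by apply/eqP; rewrite -subr_eq0 -mul_mx_scalar -mulmxBr vN0.
by apply/eqP => v0; move: v1; rewrite v0 /sqnorm2 big1 => [/esym/eqP|i _];
  rewrite ?oner_eq0 // mxE expr0n.
Qed.

Lemma eigenvalue_AAT_ge0 {k l : nat} (A : 'M[R]_(k, l)) a :
  eigenvalue (A *m A^T) a -> 0 <= a.
Proof.
move=> /eigenvalueP [v vM v_neq0].
have : sqnorm2 (v *m A) = a * sqnorm2 v.
  by rewrite sqnorm2_mulmx vM -scalemxAl mxE sqnorm2_mx.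
by have := sqnorm2_ge0 (v *m A); have := sqnorm2_gt0 v_neq0; nra.
Qed.

Lemma lambda_min_AAT_le {k l : nat} (A : 'M[R]_(k, l)) (u : 'rV[R]_k) :
  lambda_min (A *m A^T) * sqnorm2 u <= sqnorm2 (u *m A).
Proof.
case: k A u => [|k] A u; first by rewrite /sqnorm2 big_ord0 mulr0 sqnorm2_ge0.
have [v v1 vmin] := sqnorm2_mulmx_min A.
apply: le_trans (vmin u); rewrite ler_wpM2r ?sqnorm2_ge0 //.
apply: ge_inf; first by exists 0 => a /eigenvalue_AAT_ge0.
exact: eigenvalue_sqnorm2_min.
Qed.

Lemma sigma_min_sqnorm2_le {k l : nat} (A : 'M[R]_(k, l)) (s : R) (u : 'rV[R]_k) :
  0 < s -> s <= sigma_min A -> s ^+ 2 * sqnorm2 u <= sqnorm2 (u *m A).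
Proof.
rewrite /sigma_min => s_gt0 s_le; apply: le_trans (lambda_min_AAT_le A u).
rewrite ler_wpM2r ?sqnorm2_ge0 //.
have lambda_gt0 : 0 < lambda_min (A *m A^T).
  by rewrite -sqrtr_gt0 (lt_le_trans s_gt0).
by rewrite -(sqr_sqrtr (ltW lambda_gt0)) lerXn2r // ?nnegrE ?sqrtr_ge0 // ltW.
Qed.

End Rayleigh.

Section Descent.
Context {R : realType} {n m : nat}.
Implicit Types (h : 'rV[R]_n -> 'rV[R]_m) (z : 'rV[R]_n).

Definition descent_dir h z : 'rV[R]_n := - (h z *m ('J h z)^T).

Lemma is_derive_sqnorm2_descent_dir {h z} : differentiable h z ->
  is_derive z (descent_dir h z) (fun y => sqnorm2 (h y))
    (- (2 * sqnorm2 (descent_dir h z))).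
Proof.
move=> dh; set d := descent_dir h z.
apply: is_derive_eq; first exact: is_derive_sqnorm2_comp (diff_derivable dh).
rewrite deriveEjacobian //.
rewrite trmx_mul mulmxA -[h z *m _]opprK -/d mulNmx [X in 2 * X]mxE -sqnorm2_mx.
by rewrite mulrN.
Qed.

Lemma norm2_descent {h z} {sigma : R} :
  differentiable h z -> h z != 0 -> 0 < sigma -> sigma <= sigma_min ('J h z)^T ->
  exists2 e : R, 0 < e & forall s : R, 0 < s < e ->
    norm2 (h (z + s *: descent_dir h z)) + sigma / 2 * (s * `|descent_dir h z|)
      < norm2 (h z).
Proof.
move=> dh hz_neq0 sigma_gt0 sigma_le; set d := descent_dir h z.
set a := norm2 (h z); set dn := `|d|; set q := sqnorm2 d.
have hz_gt0 : 0 < sqnorm2 (h z) := sqnorm2_gt0 hz_neq0.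
have a_gt0 : 0 < a by rewrite /a norm2E sqrtr_gt0.
have a2 : a ^+ 2 = sqnorm2 (h z) by rewrite /a norm2E sqr_sqrtr ?ltW.
have q_ge : sigma ^+ 2 * a ^+ 2 <= q.
  by rewrite a2 /q sqnorm2N; exact: sigma_min_sqnorm2_le.
have q_gt0 : 0 < q by apply: lt_le_trans q_ge; rewrite mulr_gt0 ?exprn_gt0.
have dn_ge0 : 0 <= dn := normr_ge0 d.
have gain : sigma * a * dn <= q.
  have : (sigma * a * dn) ^+ 2 <= q ^+ 2.
    rewrite !exprMn [q ^+ 2]expr2.
    exact: ler_pM (mulr_ge0 (sqr_ge0 _) (sqr_ge0 _)) (sqr_ge0 _) q_ge
      (sqr_normr_le_sqnorm2 d).
  have sad_ge0 := mulr_ge0 (mulr_ge0 (ltW sigma_gt0) (ltW a_gt0)) dn_ge0.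
  move=> sq_le; rewrite -ler_sqr ?nnegrE; [exact: sq_le | exact: sad_ge0 | exact: ltW].
have slope : - (2 * q) < - q by lra.
have [e e_gt0 phi_lt] :=
  is_derive_chord_lt (- q) (is_derive_sqnorm2_descent_dir dh) slope.
have den_gt0 : 0 < sigma * dn + 1 by have := mulr_ge0 (ltW sigma_gt0) dn_ge0; lra.
exists (Num.min e (a / (sigma * dn + 1))); first by rewrite lt_min e_gt0 divr_gt0.
move=> s /andP[s_gt0]; rewrite lt_min ltr_pdivlMr // => /andP[s_lt_e s_small].
set b := a - sigma / 2 * (s * dn).
have b_gt0 : 0 < b by rewrite /b; rewrite mulrDr mulr1 in s_small; lra.
have b2 : b ^+ 2 = a ^+ 2 - s * (sigma * a * dn) + (sigma / 2 * (s * dn)) ^+ 2.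
  by rewrite /b; field.
have : sqnorm2 (h (z + s *: d)) < b ^+ 2.
  apply: (lt_le_trans (phi_lt s _)); first by rewrite s_gt0.
  have := ler_wpM2l (ltW s_gt0) gain; have := sqr_ge0 (sigma / 2 * (s * dn)).
  by rewrite b2 -a2; lra.
move=> phi_lt_b; have : norm2 (h (z + s *: d)) < b.
  by rewrite norm2E -(gtr0_norm b_gt0) -sqrtr_sqr ltr_sqrt ?exprn_gt0.
by rewrite /b; lra.
Qed.

Lemma component_penalized_descent {h z} {sigma R0 : R} (x0 : 'rV[R]_n) :
  differentiable h z -> h z != 0 -> 0 < sigma -> sigma <= sigma_min ('J h z)^T ->
  connected_component [set x | norm2 (h x) <= R0] x0 z ->
  exists2 w, connected_component [set x | norm2 (h x) <= R0] x0 w &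
    norm2 (h w) + sigma / 2 * `|w - x0| < norm2 (h z) + sigma / 2 * `|z - x0|.
Proof.
move=> dh hz_neq0 sigma_gt0 sigma_le Kz.
have [e e_gt0 descent] := norm2_descent dh hz_neq0 sigma_gt0 sigma_le.
set d := descent_dir h z in descent.
have Cz : norm2 (h z) <= R0 := connected_component_sub Kz.
have sigma2_gt0 : 0 < sigma / 2 by rewrite divr_gt0.
have e2_gt0 : 0 < e / 2 by rewrite divr_gt0.
exists (z + e / 2 *: d).
  apply: connected_component_segment (ltW e2_gt0) Kz _ => t /andP[t_ge0 t_le].
  have [->|t_neq0] := eqVneq t 0; first by rewrite scale0r addr0.
  have /descent : 0 < t < e by rewrite lt_def t_neq0 t_ge0 /=; lra.
  have := mulr_ge0 (ltW sigma2_gt0) (mulr_ge0 t_ge0 (normr_ge0 d)).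
  by rewrite /=; lra.
have /descent : 0 < e / 2 < e by rewrite e2_gt0 /=; lra.
have := ler_normD (z - x0) (e / 2 *: d).
rewrite addrAC normrZ gtr0_norm // => /(ler_wpM2l (ltW sigma2_gt0)).
lra.
Qed.

End Descent.

Theorem mainTheorem6 (R : realType) (n m : nat) (h : 'rV[R]_n -> 'rV[R]_m)
  (R0 sigma : R) :
  smooth h -> 0 < R0 -> 0 < sigma ->
  (forall x, norm2 (h x) <= R0 -> sigma <= sigma_min ('J h x)^T) ->
  forall x0 : 'rV[R]_n, norm2 (h x0) <= R0 ->
    exists z, connected_component [set x | norm2 (h x) <= R0] x0 z /\ h z = 0.
Proof.
move=> h_smooth _ sigma_gt0 h_regular x0 hx0.
have nh_cont : continuous (fun x => norm2 (h x)).
  by move=> x; exact: continuous_comp (h_smooth 0%N x) (norm2_continuous _ _).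
set C := [set x | norm2 (h x) <= R0]; set K := connected_component C x0.
pose F y := norm2 (h y) + sigma / 2 * `|y - x0|.
have F_cont : continuous F.
  move=> y; apply: cvgD (nh_cont y) _; apply: cvgM (cvg_cst _) _.
  by apply: cvg_norm; apply: cvgB; [exact: cvg_id | exact: cvg_cst].
pose S := K `&` [set y | F y <= F x0].
have S_compact : compact S.
  apply: (compact_coercive_sublevel x0 (F x0) _ F_cont (_ : 0 < sigma / 2)).
  - by apply: component_closed; exact: closed_sublevel.
  - by rewrite divr_gt0.
  - by move=> y; apply: ler_wpDl; [exact: sqrtr_ge0 | exact: lexx].
have S_x0 : S x0 by split; [exact: connected_component_refl | rewrite /= lexx].
have [z /set_mem [Kz Fz] z_min] :=
  compact_EVT_min (ex_intro S x0 S_x0) S_compact (continuous_subspaceT F_cont).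
exists z; split => //; have [//|hz_neq0] := eqVneq (h z) 0.
have [w Kw Fw] := component_penalized_descent x0 ((h_smooth 1%N).1 z) hz_neq0
  sigma_gt0 (h_regular z (connected_component_sub Kz)) Kz.
have := z_min w (mem_set (conj Kw (le_trans (ltW Fw) Fz))).
by move/(lt_le_trans Fw); rewrite ltxx.
Qed.
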